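(* Let $S=\{x_1,\dots,x_N\}$ be a spherical two-distance $2$-design (in its $n$-dimensional span), with inner products $a$ and $b$, and let $\Gamma_1$ be the graph on $\{1,\dots,N\}$ in which distinct $i,j$ are adjacent iff $\langle x_i,x_j\rangle=a$; assume $\Gamma_1$ is a strongly regular graph that is neither complete nor empty. Then the Gram matrix of $S$ coincides with the Gram matrix of $S_1(\Gamma_1)$, or with the Gram matrix of $S_2(\Gamma_1)$, or with the Gram matrix of a regular simplex of $N$ points in $\mathbb{R}^{N-1}$ (all off-diagonal entries equal to $-1/(N-1)$). In particular $S$ is, up to isometry, $S_1(\Gamma_1)$, $S_2(\Gamma_1)$, or a regular $(N-1)$-dimensional simplex.
   Context: A set of unit vectors $\{x_1,\dots,x_N\}$ spanning an $n$-dimensional real inner product space $V$ is a spherical $2$-design if $\sum_i x_i=0$ and $\sum_{i,j=1}^N\langle x_i,x_j\rangle^2=N^2/n$ (equivalently $\sum_i x_i=0$ and $\sum_i\langle x,x_i\rangle^2=\frac Nn\|x\|^2$ for all $x\in V$); it is two-distance if there are two reals $a\ne b$ such that $\langle x_i,x_j\rangle\in\{a,b\}$ for all $i\neq j$. A strongly regular graph is a regular graph in which any two adjacent vertices have a constant number $\lambda$ of common neighbours and any two nonadjacent vertices have a constant number $\mu$ of common neighbours. For such a graph $\Gamma_1$ on $N$ vertices, neither complete nor empty, with adjacency matrix $\Phi_1$, the orthogonal complement $\mathbf{1}^\perp\subset\mathbb{R}^N$ of the all-ones vector decomposes as an orthogonal sum of two eigenspaces $E_1,E_2$ of $\Phi_1$.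 $S_j(\Gamma_1)$ ($j=1,2$) is the set of $N$ vectors obtained by orthogonally projecting the standard basis vectors $e_1,\dots,e_N$ of $\mathbb{R}^N$ onto $E_j$ and normalizing each projection to unit length (vector $i$ coming from $e_i$). *)

(* Real scalars: an arbitrary real closed field R
   (the statement is first-order algebraic, so this covers the reals). *)
From HB Require Import structures.
From mathcomp Require Import all_boot all_order all_algebra.
Set Implicit Arguments. Unset Strict Implicit. Unset Printing Implicit Defensive.
Import Order.TTheory GRing.Theory Num.Theory.
Local Open Scope ring_scope.

Definition dotv (R : rcfType) (m : nat) (u v : 'rV[R]_m) : R := (u *m v^T) 0 0.
Definition normv (R : rcfType) (m : nat) (u : 'rV[R]_m) : R := Num.sqrt (dotv u u).
Definition normalize (R : rcfType) (m : nat) (u : 'rV[R]_m) : 'rV[R]_m :=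
  (normv u)^-1 *: u.

Definition gram_of (R : rcfType) (N m : nat) (x : 'I_N -> 'rV[R]_m) : 'M[R]_N :=
  \matrix_(i, j) dotv (x i) (x j).

(* The family S = {x_1..x_N} is given as the rows of X : 'M_(N,m); its span
   (the space V) has dimension n = \rank X. *)
Definition spherical_2design (R : rcfType) (N m : nat) (X : 'M[R]_(N, m)) : Prop :=
  [/\ (forall i, dotv (row i X) (row i X) = 1),
      \sum_(i < N) row i X = 0
    & \sum_(i < N) \sum_(j < N) (dotv (row i X) (row j X)) ^+ 2
        = (N%:R) ^+ 2 / (\rank X)%:R].

Definition two_distance (R : rcfType) (N m : nat) (X : 'M[R]_(N, m)) (a b : R) : Prop :=
  a != b /\ (forall i j : 'I_N, i != j ->
               dotv (row i X) (row j X) = a \/ dotv (row i X) (row j X) = b).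

Definition graph_of_ip (R : rcfType) (N m : nat) (X : 'M[R]_(N, m)) (a : R) : rel 'I_N :=
  fun i j => (i != j) && (dotv (row i X) (row j X) == a).

Definition strongly_regular (N : nat) (adj : rel 'I_N) : Prop :=
  [/\ (forall i j, adj i j = adj j i),
      (forall i, ~~ adj i i)
    & exists k lam mu : nat,
      [/\ (forall i, #|[set j | adj i j]| = k),
          (forall i j, adj i j -> #|[set h | adj i h && adj j h]| = lam)
        & (forall i j, i != j -> ~~ adj i j -> #|[set h | adj i h && adj j h]| = mu)]].

Definition complete_graph (N : nat) (adj : rel 'I_N) : Prop :=
  forall i j, i != j -> adj i j.
Definition empty_graph (N : nat) (adj : rel 'I_N) : Prop :=
  forall i j, ~~ adj i j.

Definition adjmx (R : rcfType) (N : nat) (adj : rel 'I_N) : 'M[R]_N :=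
  \matrix_(i, j) (adj i j)%:R.

(* E_theta = eigenspace of Phi for theta intersected with 1^perp
   (row space of the returned square matrix). The nonzero ones among these are
   exactly the two eigenspaces E_1, E_2 decomposing 1^perp. *)
Definition eigsp_perp1 (R : rcfType) (N : nat) (Phi : 'M[R]_N) (theta : R) : 'M[R]_N :=
  (kermx (Phi - theta%:M) :&: kermx (const_mx 1 : 'M[R]_(N, 1)))%MS.

Definition orthoproj (R : rcfType) (N : nat) (A : 'M[R]_N) : 'M[R]_N :=
  let B := row_base A in B^T *m invmx (B *m B^T) *m B.

(* S_theta(Gamma): normalized orthogonal projections of e_1..e_N onto E_theta. *)
Definition proj_frame (R : rcfType) (N : nat) (adj : rel 'I_N) (theta : R)
    : 'I_N -> 'rV[R]_N :=
  fun i => normalize (delta_mx 0 i *m orthoproj (eigsp_perp1 (adjmx R adj) theta)).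

From HB Require Import structures.
From mathcomp Require Import all_boot all_order all_algebra.
Import Order.TTheory GRing.Theory Num.Theory.
Local Open Scope ring_scope.
From mathcomp Require Import zify ring.
Set Implicit Arguments. Unset Strict Implicit.

(* Let G = X X^T be the Gram matrix of the design and r its rank.
   The design conditions say tr G = N and tr G^2 = N^2 / r, which is the
   equality case of Cauchy-Schwarz for the r nonzero eigenvalues of G: hence
   G = c P with c = N / r for the orthogonal projector P onto any r-dimensional
   space containing the rows of G (lemma [design_gram_scaled_proj]).  In
   particular G^2 = c G.  Since S is two-distance, G = (1-b) I + (a-b) A + b J
   with A the adjacency matrix of Gamma_1, and G 1 = 0; together with G^2 = c G
   this forces the row space of G to be exactly the eigenspace E_theta of A
   inside 1^perp, theta = (c-1+b)/(a-b) (lemma [eigsp_perp1_eq_rowspace]).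
   So G = c P_E, and normalizing the rows of the projector P_E (whose diagonal
   is constantly 1/c) gives back exactly G (lemma [gram_proj_frame]).  Thus the
   first alternative of the theorem always holds. *)

Section SumsOfSquares.
Variable R : rcfType.

Lemma mulmx_trmx_diag p q (Y : 'M[R]_(p, q)) i :
  (Y *m Y^T) i i = \sum_j Y i j ^+ 2.
Proof. by rewrite !mxE; apply: eq_bigr => j _; rewrite !mxE expr2. Qed.

Lemma sum_sqr_row_eq0 p q (Y : 'M[R]_(p, q)) i :
  \sum_j Y i j ^+ 2 = 0 -> forall j, Y i j = 0.
Proof.
move=> E j; apply/eqP; rewrite -sqrf_eq0; apply/eqP.
exact: (psumr_eq0P (P := predT) (fun j _ => sqr_ge0 (Y i j)) E).
Qed.

Lemma mulmx_trmx_eq0 p q (Y : 'M[R]_(p, q)) : Y *m Y^T = 0 -> Y = 0.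
Proof.
move=> YY0; apply/matrixP => i j; rewrite mxE.
by apply: sum_sqr_row_eq0; rewrite -mulmx_trmx_diag YY0 mxE.
Qed.

Lemma mxtrace_mulmx_trmx_eq0 n (H : 'M[R]_n) : \tr (H *m H^T) = 0 -> H = 0.
Proof.
move=> tr0; apply/matrixP => i j; rewrite mxE.
apply: sum_sqr_row_eq0; rewrite -mulmx_trmx_diag.
apply: (psumr_eq0P (P := predT) (F := fun i => (H *m H^T) i i) _ tr0) => // k _.
by rewrite mulmx_trmx_diag; apply: sumr_ge0 => l _; exact: sqr_ge0.
Qed.

Lemma mxrank_mulmx_trmx p q (Y : 'M[R]_(p, q)) : \rank (Y *m Y^T) = \rank Y.
Proof.
apply/eqP; rewrite eqn_leq mxrankM_maxl /=.
set K := kermx (Y *m Y^T).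
have KY0 : K *m Y = 0.
  have KG : K *m (Y *m Y^T) = 0 by apply/eqP; rewrite -sub_kermx submx_refl.
  by apply: mulmx_trmx_eq0; rewrite trmx_mul !mulmxA -(mulmxA K) KG mul0mx.
have : (K <= kermx Y)%MS by rewrite sub_kermx KY0.
move/mxrankS; rewrite !mxrank_ker.
by have := rank_leq_row Y; have := rank_leq_row (Y *m Y^T); lia.
Qed.

End SumsOfSquares.

Section ProjectorOfBasis.
Variables (R : rcfType) (r N : nat) (B : 'M[R]_(r, N)).
Hypothesis BBT_unit : B *m B^T \in unitmx.
Local Notation P := (B^T *m invmx (B *m B^T) *m B).

Lemma basis_proj_tr : P^T = P.
Proof. by rewrite !trmx_mul trmxK trmx_inv trmx_mul trmxK mulmxA. Qed.

Lemma basis_proj_idem : P *m P = P.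
Proof.
rewrite -!mulmxA; congr (_ *m _).
by rewrite (mulmxA B) (mulmxA (B *m B^T)) mulmxV // mul1mx.
Qed.

Lemma basis_proj_trace : \tr P = r%:R.
Proof. by rewrite mxtrace_mulC mulmxA mulmxV // mxtrace1. Qed.

Lemma basis_proj_id k (Y : 'M[R]_(k, N)) : (Y <= B)%MS -> Y *m P = Y.
Proof.
move=> sYB; rewrite -(mulmxKpV sYB); move: (Y *m pinvmx B) => C.
by rewrite -!mulmxA (mulmxA B) (mulmxA (B *m B^T)) mulmxV // mul1mx.
Qed.

End ProjectorOfBasis.

Section OrthoProj.
Variables (R : rcfType) (N : nat) (A : 'M[R]_N).

Lemma row_base_gram_unit : row_base A *m (row_base A)^T \in unitmx.
Proof.
by rewrite -row_free_unit /row_free mxrank_mulmx_trmx; exact: row_base_free.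
Qed.

Lemma orthoproj_tr : (orthoproj A)^T = orthoproj A.
Proof. exact: basis_proj_tr. Qed.

Lemma orthoproj_idem : orthoproj A *m orthoproj A = orthoproj A.
Proof. exact: (basis_proj_idem row_base_gram_unit). Qed.

Lemma orthoproj_trace : \tr (orthoproj A) = (\rank A)%:R.
Proof. exact: (basis_proj_trace row_base_gram_unit). Qed.

Lemma orthoproj_id k (Y : 'M[R]_(k, N)) : (Y <= A)%MS -> Y *m orthoproj A = Y.
Proof. by move=> sYA; apply: (basis_proj_id row_base_gram_unit); rewrite eq_row_base. Qed.

End OrthoProj.

(* Equality case of Cauchy-Schwarz: a symmetric G supported on the range of a
   projector P of trace r, with tr G = t and tr G^2 = t^2/r, is (t/r) P.
   Indeed tr((G - cP)(G - cP)^T) = t^2/r - 2ct + c^2 r = 0 for c = t/r. *)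
Lemma scaled_projector_of_traces (R : rcfType) n (G P : 'M[R]_n) (t : R) (r : nat) :
  G^T = G -> P^T = P -> P *m P = P -> G *m P = G -> \tr G = t ->
  \tr (G *m G) = t ^+ 2 / r%:R -> \tr P = r%:R -> (0 < r)%N ->
  G = (t / r%:R) *: P.
Proof.
move=> GT PT PP GP trG trGG trP r_gt0.
have PG : P *m G = G by rewrite -{1}PT -{1}GT -trmx_mul GP GT.
apply/eqP; rewrite -subr_eq0; apply/eqP; apply: mxtrace_mulmx_trmx_eq0.
set c := t / r%:R.
rewrite [X in _ *m X]linearB /= [(c *: P)^T]linearZ /= GT PT.
rewrite mulmxBl !mulmxBr -!scalemxAl -!scalemxAr GP PG PP scalerA.
rewrite !linearB /= !linearZ /= trG trGG trP /c.
have r_neq0 : r%:R != 0 :> R by rewrite pnatr_eq0 -lt0n.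
by field.
Qed.

Lemma dotv_row (R : rcfType) p q (A : 'M[R]_(p, q)) i j :
  dotv (row i A) (row j A) = (A *m A^T) i j.
Proof. by rewrite /dotv !mxE; apply: eq_bigr => k _; rewrite !mxE. Qed.

Lemma dotvZ (R : rcfType) q (u v : 'rV[R]_q) s t :
  dotv (s *: u) (t *: v) = s * t * dotv u v.
Proof.
rewrite /dotv linearZ /= -scalemxAl -scalemxAr scalerA !mxE.
by rewrite mulrC (mulrC s).
Qed.

Lemma gram_of_rows (R : rcfType) p q (A : 'M[R]_(p, q)) :
  gram_of (fun i => row i A) = A *m A^T.
Proof. by apply/matrixP => i j; rewrite mxE dotv_row. Qed.

Lemma const_mx1_col_row (R : rcfType) N :
  (const_mx 1 : 'M[R]_N) = (const_mx 1 : 'M[R]_(N, 1)) *m const_mx 1.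
Proof. by apply/matrixP => i j; rewrite !mxE big_ord1 !mxE mulr1. Qed.

Lemma gram_proj_frame (R : rcfType) N (A : 'M[R]_N) (d : R) :
  0 < d -> (forall i, orthoproj A i i = d) ->
  gram_of (fun i => normalize (delta_mx 0 i *m orthoproj A)) = d^-1 *: orthoproj A.
Proof.
move=> d_gt0 Pii; set P := orthoproj A.
have PPT : P *m P^T = P by rewrite /P orthoproj_tr orthoproj_idem.
apply/matrixP => i j; rewrite /gram_of /normalize !mxE -!rowE dotvZ /normv.
rewrite !dotv_row PPT !Pii -invfM -expr2 sqr_sqrtr ?invr_ge0 ?ltW //.
by rewrite [P i j]mxE.
Qed.

Lemma eigsp_perp1_eq_rowspace (R : rcfType) N (G Adj : 'M[R]_N) (c s beta gamma : R) :
  c != 0 -> beta != 0 ->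
  G *m (const_mx 1 : 'M[R]_(N, 1)) = 0 -> G *m G = c *: G ->
  G = s%:M + beta *: Adj + gamma *: const_mx 1 ->
  (eigsp_perp1 Adj ((c - s) / beta) == G)%MS.
Proof.
move=> c_neq0 beta_neq0 G1 GG Gdec.
set theta := (c - s) / beta; set E := eigsp_perp1 Adj theta.
have GJ : G *m (const_mx 1 : 'M[R]_N) = 0 by rewrite const_mx1_col_row mulmxA G1 mul0mx.
have betaAdj : beta *: Adj = G - s%:M - gamma *: const_mx 1.
  by rewrite Gdec; apply/matrixP => i j; rewrite !mxE; ring.
have G_eig : G *m (Adj - theta%:M) = 0.
  apply/eqP; have := scalemx_eq0 beta (G *m (Adj - theta%:M)).
  rewrite (negbTE beta_neq0) /= => <-; apply/eqP.
  rewrite scalemxAr scalerBr betaAdj scale_scalar_mx !mulmxBr -scalemxAr GJ GG scaler0 subr0.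
  rewrite !mul_mx_scalar; apply/matrixP => i j; rewrite !mxE /theta.
  by field.
have E1 : E *m (const_mx 1 : 'M[R]_(N, 1)) = 0.
  by apply/eqP; rewrite -sub_kermx capmxSr.
have E_eig : E *m Adj = theta *: E.
  apply/eqP; rewrite -subr_eq0 -mul_mx_scalar -mulmxBr; apply/eqP/eqP.
  by rewrite -sub_kermx capmxSl.
have EG : E *m G = c *: E.
  rewrite Gdec !mulmxDr -!scalemxAr E_eig const_mx1_col_row mulmxA E1 mul0mx.
  rewrite scaler0 addr0 mul_mx_scalar scalerA -scalerDl; congr (_ *: _).
  by rewrite /theta; field.
apply/andP; split.
- have -> : E = c^-1 *: (E *m G) by rewrite EG scalerA mulVf ?scale1r.
  by rewrite scalemx_sub ?submxMl.
- by rewrite sub_capmx !sub_kermx G_eig G1 !eqxx.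
Qed.

Section DesignGram.
Variables (R : rcfType) (N m : nat) (X : 'M[R]_(N, m)).
Hypothesis design : spherical_2design X.
Local Notation G := (X *m X^T).

Lemma design_gram_diag i : G i i = 1.
Proof. by case: design => diag _ _; rewrite -dotv_row diag. Qed.

Lemma design_gram_ones : G *m (const_mx 1 : 'M[R]_(N, 1)) = 0.
Proof.
case: design => _ sum0 _.
have XT1 : X^T *m (const_mx 1 : 'M[R]_(N, 1)) = 0.
  apply/matrixP => k l; rewrite !mxE.
  transitivity ((\sum_i row i X) 0 k); last by rewrite sum0 mxE.
  by rewrite summxE; apply: eq_bigr => i _; rewrite !mxE mulr1.
by rewrite -mulmxA XT1 mulmx0.
Qed.

Lemma design_gram_trace : \tr G = N%:R.
Proof.
rewrite /mxtrace (eq_bigr (fun _ => 1)) ?sumr_const ?card_ord // => i _.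
exact: design_gram_diag.
Qed.

Lemma design_gram_trace_sqr : \tr (G *m G) = N%:R ^+ 2 / (\rank X)%:R.
Proof.
case: design => _ _ <-; rewrite /mxtrace; apply: eq_bigr => i _; rewrite !mxE.
apply: eq_bigr => j _; rewrite !dotv_row expr2; congr (_ * _).
by rewrite -[in LHS](trmxK X) -trmx_mul mxE trmxK.
Qed.

Lemma design_rank_gt0 : (0 < N)%N -> (0 < \rank X)%N.
Proof.
move=> N_gt0; rewrite -mxrank_mulmx_trmx lt0n mxrank_eq0; apply/eqP.
move=> /matrixP/(_ (Ordinal N_gt0) (Ordinal N_gt0)).
by rewrite design_gram_diag mxE; apply/eqP; rewrite oner_eq0.
Qed.

(* Cauchy-Schwarz equality case: G is N / rank X times the orthogonal
   projector onto any space of dimension rank X containing its rows. *)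
Lemma design_gram_scaled_proj (A : 'M[R]_N) :
  (0 < N)%N -> (G <= A)%MS -> \rank A = \rank X ->
  G = (N%:R / (\rank X)%:R) *: orthoproj A.
Proof.
move=> N_gt0 sGA rankA.
apply: scaled_projector_of_traces; rewrite ?orthoproj_idem ?orthoproj_id //.
- by rewrite trmx_mul trmxK.
- exact: orthoproj_tr.
- exact: design_gram_trace.
- exact: design_gram_trace_sqr.
- by rewrite orthoproj_trace rankA.
- exact: design_rank_gt0.
Qed.

Lemma design_gram_sqr : (0 < N)%N -> G *m G = (N%:R / (\rank X)%:R) *: G.
Proof.
move=> N_gt0; have sGG := submx_refl G.
have Gproj := design_gram_scaled_proj N_gt0 sGG (mxrank_mulmx_trmx X).
by rewrite {2}Gproj -scalemxAr orthoproj_id.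
Qed.

End DesignGram.

Lemma two_distance_gram_decomp (R : rcfType) N m (X : 'M[R]_(N, m)) (a b : R) :
  (forall i, dotv (row i X) (row i X) = 1) -> two_distance X a b ->
  X *m X^T = (1 - b)%:M + (a - b) *: adjmx R (graph_of_ip X a) + b *: const_mx 1.
Proof.
move=> unit [_ two_ip]; apply/matrixP => i j; rewrite -dotv_row !mxE /graph_of_ip.
have [->|ij] := eqVneq i j.
  by rewrite unit /= mulr1n mulr0 addr0 mulr1 subrK.
rewrite /= mulr0n add0r mulr1.
have [-> | ip_neq_a] := eqVneq (dotv (row i X) (row j X)) a; first by rewrite /= mulr1 subrK.
case: (two_ip i j ij) => ip; first by rewrite ip eqxx in ip_neq_a.
by rewrite ip /= mulr0 add0r.
Qed.

Theorem theorem3p4 (R : rcfType) (N m : nat) (X : 'M[R]_(N, m)) (a b : R) :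
  spherical_2design X ->
  two_distance X a b ->
  strongly_regular (graph_of_ip X a) ->
  ~ complete_graph (graph_of_ip X a) ->
  ~ empty_graph (graph_of_ip X a) ->
  (exists theta : R,
      (0 < \rank (eigsp_perp1 (adjmx R (graph_of_ip X a)) theta))%N /\
      gram_of (fun i => row i X) = gram_of (proj_frame (graph_of_ip X a) theta))
  \/ (forall i j : 'I_N, i != j ->
        gram_of (fun k => row k X) i j = - ((N.-1)%:R)^-1).
Proof.
move=> design two_dist _ not_complete _; left.
have N_gt0 : (0 < N)%N.
  rewrite lt0n; apply/eqP => N0; apply: not_complete => i.
  by move: (ltn_ord i); rewrite {2}N0.
pose c : R := N%:R / (\rank X)%:R.
have c_gt0 : 0 < c by rewrite divr_gt0 ?ltr0n ?design_rank_gt0.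
have [unit_rows _ _] := design.
have ab_neq0 : a - b != 0 by case: two_dist; rewrite subr_eq0.
have /eqmxP rowsE := eigsp_perp1_eq_rowspace (lt0r_neq0 c_gt0) ab_neq0
  (design_gram_ones design) (design_gram_sqr design N_gt0)
  (two_distance_gram_decomp unit_rows two_dist).
set E := eigsp_perp1 _ _ in rowsE.
have rankE : \rank E = \rank X by rewrite rowsE mxrank_mulmx_trmx.
have sGE : (X *m X^T <= E)%MS by rewrite rowsE.
have G_proj := design_gram_scaled_proj design N_gt0 sGE rankE.
have Pii i : orthoproj E i i = c^-1.
  have := congr1 (fun M : 'M[R]_N => M i i) G_proj.
  rewrite /= design_gram_diag // mxE -/c => /(canLR (mulKf (lt0r_neq0 c_gt0))).
  by rewrite mulr1.
exists ((c - (1 - b)) / (a - b)); split; first by rewrite -/E rankE design_rank_gt0.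
rewrite gram_of_rows /proj_frame -/E (gram_proj_frame (d := c^-1)) ?invr_gt0 // invrK.
exact: G_proj.
Qed.
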